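(* Let $\mathbb{F}$ be a field and $\mathbb{A}$ a countably infinite oligomorphic structure. The following are equivalent: (a) orbit-finitely spanned vector spaces over $\mathbb{A}$ are closed under taking equivariant subspaces (i.e. every equivariant subspace of an orbit-finitely spanned vector space is itself orbit-finitely spanned); (b) for every orbit-finitely spanned vector space $V$ over $\mathbb{A}$, there is no infinite strictly ascending chain of equivariant subspaces of $V$; (c) for every $d \in \{1,2,\dots\}$, the space $\operatorname{Lin}_{\mathbb{F}} \mathbb{A}^d$ has no infinite strictly ascending chain of equivariant subspaces. Furthermore, if these conditions hold, then the orbit-finitely spanned vector spaces over $\mathbb{A}$ are, up to equivariant linear bijections, exactly the quotient spaces $U/W$ where $d \in \{1,2,\dots\}$ and $W \subseteq U$ are equivariant subspaces of $\operatorname{Lin}_{\mathbb{F}}\mathbb{A}^d$.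
   Context: A structure $\mathbb{A}$ is oligomorphic if for every $d\ge 1$ the componentwise action of its automorphism group $\operatorname{Aut}(\mathbb{A})$ on $\mathbb{A}^d$ has finitely many orbits. An orbit-finite set over $\mathbb{A}$ is a set obtained from some $\mathbb{A}^d$ by restricting to an $\operatorname{Aut}(\mathbb{A})$-invariant subset $X\subseteq\mathbb{A}^d$ and then quotienting by an $\operatorname{Aut}(\mathbb{A})$-invariant equivalence relation; it carries the induced action of $\operatorname{Aut}(\mathbb{A})$. For a set $X$ with an action of $\operatorname{Aut}(\mathbb{A})$, $\operatorname{Lin}_{\mathbb{F}} X$ is the vector space of finite formal $\mathbb{F}$-linear combinations of elements of $X$, with action $\pi(\sum_i\lambda_i x_i)=\sum_i \lambda_i\pi(x_i)$. An element $v$ of a set with an $\operatorname{Aut}(\mathbb{A})$-action is supported by $S\subseteq\mathbb{A}$ if every automorphism fixing $S$ pointwise fixes $v$. An orbit-finitely spanned vector space over $\mathbb{A}$ is an $\mathbb{F}$-vector space with an action of $\operatorname{Aut}(\mathbb{A})$ by linear maps such that every vector has a finite support and the space is spanned by some $\operatorname{Aut}(\mathbb{A})$-invariant subset which is an orbit-finite set. A subspace is equivariant if it is invariant under the action of $\operatorname{Aut}(\mathbb{A})$. *)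

From HB Require Import structures.
From mathcomp Require Import all_boot all_algebra.
From mathcomp Require Import finmap.
From mathcomp Require Import monalg.

Set Implicit Arguments.
Unset Strict Implicit.
Unset Printing Implicit Defensive.

Import GRing.Theory.
Local Open Scope ring_scope.

Record structure := Structure {
  carrier :> countType;
  symb : Type;
  arity : symb -> nat;
  rel : forall s : symb, (arity s).-tuple carrier -> Prop
}.

Record autom (A : structure) := Autom {
  aut_fun :> A -> A;
  aut_inv : A -> A;
  aut_funK : cancel aut_fun aut_inv;
  aut_invK : cancel aut_inv aut_fun;
  aut_rel : forall (s : symb A) (t : (arity s).-tuple A),
      rel t <-> rel (map_tuple aut_fun t)
}.

Definition tact (A : structure) (d : nat) (pi : autom A) (t : d.-tuple A)
  : d.-tuple A := map_tuple pi t.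

(* A is countably infinite (it is a countType, and it is infinite). *)
Definition countably_infinite (A : structure) : Prop :=
  exists f : nat -> A, injective f.

Definition oligomorphic (A : structure) : Prop :=
  forall d : nat, (1 <= d)%N ->
    exists reps : seq (d.-tuple A),
      forall t : d.-tuple A, exists2 r, r \in reps &
        exists pi : autom A, tact pi r = t.

Section Spaces.
Variables (F : fieldType) (A : structure).

Definition lin_action (V : lmodType F) (act : autom A -> V -> V) : Prop :=
  [/\ forall pi (u v : V), act pi (u + v) = act pi u + act pi v,
      forall pi (c : F) (v : V), act pi (c *: v) = c *: act pi v,
      forall (rho : autom A) (v : V), (forall a, rho a = a) -> act rho v = v &
      forall (pi sigma rho : autom A) (v : V),
        (forall a, rho a = pi (sigma a)) -> act rho v = act pi (act sigma v)].

Definition supported_by (V : Type) (act : autom A -> V -> V)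
  (S : seq A) (v : V) : Prop :=
  forall pi : autom A, (forall a, a \in S -> pi a = a) -> act pi v = v.

Definition fin_supp (V : Type) (act : autom A -> V -> V) : Prop :=
  forall v : V, exists S : seq A, supported_by act S v.

Definition invariant (V : Type) (act : autom A -> V -> V) (X : V -> Prop) :=
  forall pi v, X v -> X (act pi v).

(* The subset X of V, with the induced action, is an orbit-finite set:
   it is equivariantly in bijection with P/E for some invariant
   P subset of A^d and invariant equivalence relation E on P.
   The bijection P/E -> X is given by the map f : P -> X whose fibres
   are exactly the E-classes. *)
Definition orbit_finite_subset (V : Type) (act : autom A -> V -> V)
  (X : V -> Prop) : Prop :=
  exists (d : nat) (P : d.-tuple A -> Prop) (E : d.-tuple A -> d.-tuple A -> Prop)
         (f : d.-tuple A -> V),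
  [/\
      forall pi t, P t -> P (tact pi t),
      (forall t, P t -> E t t) /\
      (forall t u, P t -> P u -> E t u -> E u t) /\
      (forall t u w, P t -> P u -> P w -> E t u -> E u w -> E t w),
      forall pi t u, P t -> P u -> E t u -> E (tact pi t) (tact pi u),
      (forall t, P t -> X (f t)) /\ (forall x, X x -> exists2 t, P t & f t = x) /\
      (forall t u, P t -> P u -> (f t = f u <-> E t u)) &
      forall pi t, P t -> f (tact pi t) = act pi (f t)].

Definition in_span (V : lmodType F) (X : V -> Prop) (v : V) : Prop :=
  exists (n : nat) (c : 'I_n -> F) (x : 'I_n -> V),
    (forall i, X (x i)) /\ v = \sum_(i < n) c i *: x i.

Definition of_spanned_on (V : lmodType F) (act : autom A -> V -> V)
  (W : V -> Prop) : Prop :=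
  exists X : V -> Prop,
    [/\ forall x, X x -> W x, invariant act X, orbit_finite_subset act X &
        forall w, W w -> in_span X w].

Definition ofs_space (V : lmodType F) (act : autom A -> V -> V) : Prop :=
  [/\ lin_action act, fin_supp act & of_spanned_on act (fun _ => True)].

Definition eq_subspace (V : lmodType F) (act : autom A -> V -> V)
  (W : V -> Prop) : Prop :=
  [/\ W 0, forall u v, W u -> W v -> W (u + v),
      forall (c : F) v, W v -> W (c *: v) & invariant act W].

Definition strict_chain (V : lmodType F) (act : autom A -> V -> V)
  (C : nat -> V -> Prop) : Prop :=
  forall n, [/\ eq_subspace act (C n),
                (forall v, C n v -> C n.+1 v) &
                exists v, C n.+1 v /\ ~ C n v].

Definition Lin (d : nat) : lmodType F := {malg F[d.-tuple A]}.

Definition lin_act (d : nat) (pi : autom A) (f : Lin d) : Lin d :=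
  \sum_(k <- msupp f) << f@_k *g tact pi k >>.

(* V is equivariantly linearly isomorphic to the quotient U/W, expressed by
   an equivariant linear map phi defined on U, onto V, with kernel W. *)
Definition quotient_presentation (V : lmodType F) (act : autom A -> V -> V)
  (d : nat) (U W : Lin d -> Prop) (phi : Lin d -> V) : Prop :=
  [/\ forall u v, U u -> U v -> phi (u + v) = phi u + phi v,
      forall (c : F) u, U u -> phi (c *: u) = c *: phi u,
      forall pi u, U u -> phi (lin_act pi u) = act pi (phi u),
      forall v : V, exists2 u, U u & phi u = v &
      forall u, U u -> (phi u = 0 <-> W u)].

End Spaces.

From Pilot Require Import Defs.
From HB Require Import structures.
From mathcomp Require Import all_boot all_algebra.
From mathcomp Require Import finmap monalg.
From Stdlib Require Import ClassicalDescription ClassicalEpsilon Classical.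

Set Implicit Arguments.
Unset Strict Implicit.
Unset Printing Implicit Defensive.

Import GRing.Theory.
Local Open Scope ring_scope.

(* (a) -> (b): the union of an ascending chain of equivariant subspaces is an
   equivariant subspace, so by (a) it is spanned by an orbit-finite set; this
   set has finitely many orbits, hence lies in a single member of the chain,
   which therefore cannot ascend strictly.
   (b) -> (a): if an equivariant subspace W were not orbit-finitely spanned,
   choosing each w_(n+1) in W outside the span of the orbits of w_0, ..., w_n
   would give an infinite strictly ascending chain.  The orbits of finitely
   many vectors form an orbit-finite set because, with two distinct atoms at
   hand, the index of an orbit can be coded into the tuple of atoms that
   represents its elements.
   (b) <-> (c): Lin A^d is orbit-finitely spanned, and every orbit-finitely
   spanned space is an equivariant linear image of some Lin A^d, along which
   chains pull back.  The same cover presents the space as U/W with W its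
   kernel; conversely, under (a) the subspace U is orbit-finitely spanned, and
   so is its image. *)

Section Automorphisms.
Variable A : structure.

Lemma map_tuple_comp d (f g : A -> A) (t : d.-tuple A) :
  map_tuple f (map_tuple g t) = map_tuple (f \o g) t.
Proof. by apply: val_inj; rewrite /= map_comp. Qed.

Lemma eq_map_tuple_id d (f : A -> A) (t : d.-tuple A) : f =1 id -> map_tuple f t = t.
Proof. by move=> f_id; apply: val_inj; rewrite /= (eq_map f_id) map_id. Qed.

Definition autom_id : autom A.
Proof.
refine (@Autom A id id (fun _ => erefl) (fun _ => erefl) _).
by move=> s t; rewrite eq_map_tuple_id.
Defined.

Definition autom_inv (pi : autom A) : autom A.
Proof.
refine (@Autom A (aut_inv pi) pi (aut_invK pi) (aut_funK pi) _).
move=> s t; rewrite [in X in _ <-> X](aut_rel pi) map_tuple_comp.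
by rewrite eq_map_tuple_id // => a /=; rewrite aut_invK.
Defined.

Definition autom_comp (pi sigma : autom A) : autom A.
Proof.
refine (@Autom A (pi \o sigma) (aut_inv sigma \o aut_inv pi) _ _ _).
- by move=> a /=; rewrite !aut_funK.
- by move=> a /=; rewrite !aut_invK.
by move=> s t; rewrite (aut_rel sigma) (aut_rel pi (map_tuple sigma t)) map_tuple_comp.
Defined.

Lemma autom_inj (pi : autom A) : injective pi.
Proof. exact: can_inj (aut_funK pi). Qed.

Lemma tactK d pi (t : d.-tuple A) : tact (autom_inv pi) (tact pi t) = t.
Proof. by rewrite /tact map_tuple_comp eq_map_tuple_id // => a /=; rewrite aut_funK. Qed.

Lemma oligomorphic_orbits d : oligomorphic A -> exists reps : seq (d.-tuple A),
  forall t : d.-tuple A, exists2 r, r \in reps & exists pi : autom A, tact pi r = t.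
Proof.
(* [oligomorphic] only speaks of d >= 1; A^0 is a single orbit. *)
case: d => [|d] olig; last exact: olig.
exists [:: [tuple]] => t; exists [tuple]; rewrite ?inE //.
by exists autom_id; rewrite tuple0 [RHS]tuple0.
Qed.

End Automorphisms.

Lemma orbit_finite_image (A : structure) (V1 V2 : Type) (act1 : autom A -> V1 -> V1)
    (act2 : autom A -> V2 -> V2) (X : V1 -> Prop) (phi : V1 -> V2) :
  (forall pi x, X x -> phi (act1 pi x) = act2 pi (phi x)) ->
  orbit_finite_subset act1 X ->
  orbit_finite_subset act2 (fun y => exists2 x, X x & y = phi x).
Proof.
move=> phi_equiv [d [P [_ [f [Pinv _ _ [fX [fsurj _]] f_equiv]]]]].
exists d, P, (fun t u => phi (f t) = phi (f u)), (phi \o f); split=> //.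
- by split=> //; split=> [t u _ _ -> | t u w _ _ _ -> ->].
- by move=> pi t u Pt Pu /= tu; rewrite !f_equiv // !phi_equiv ?tu //; apply: fX.
- split; first by move=> t Pt; exists (f t); first exact: fX.
  by split=> // y [x /fsurj [t Pt <-] ->]; exists t.
- by move=> pi t Pt /=; rewrite f_equiv // phi_equiv //; apply: fX.
Qed.

Section Actions.
Variables (F : fieldType) (A : structure) (V : lmodType F) (act : autom A -> V -> V).
Hypothesis act_lin : lin_action act.

Lemma actD (pi : autom A) u v : act pi (u + v) = act pi u + act pi v.
Proof. by case: act_lin. Qed.

Lemma actZ (pi : autom A) c v : act pi (c *: v) = c *: act pi v.
Proof. by case: act_lin. Qed.

Lemma act0 (pi : autom A) : act pi 0 = 0.
Proof. by have := actZ pi 0 0; rewrite !scale0r. Qed.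

Lemma act_id v : act (autom_id A) v = v.
Proof. by case: act_lin => _ _ act1 _; apply: act1. Qed.

Lemma act_comp (pi sigma : autom A) v :
  act (autom_comp pi sigma) v = act pi (act sigma v).
Proof. by case: act_lin => _ _ _ actM; apply: actM. Qed.

Lemma act_supported S w (pi sigma : autom A) : supported_by act S w ->
  {in S, pi =1 sigma} -> act pi w = act sigma w.
Proof.
move=> Sw eqS; case: (act_lin) => _ _ _ actM.
rewrite (actM sigma (autom_comp (autom_inv sigma) pi)) => [|a /=]; last by rewrite aut_invK.
by rewrite Sw // => a aS /=; rewrite eqS // aut_funK.
Qed.

End Actions.

Section Spans.
Variables (F : fieldType) (V : lmodType F).
Implicit Types (X Y S : V -> Prop).

Lemma in_span0 X : in_span X 0.
Proof. by exists 0%N, (fun _ => 0), (fun _ => 0); split => [[]//|]; rewrite big_ord0. Qed.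

Lemma in_span_cons X c x v : X x -> in_span X v -> in_span X (c *: x + v).
Proof.
move=> Xx [n [cs [xs [Xxs ->]]]].
exists n.+1, (fun i => if unlift ord0 i is Some j then cs j else c),
  (fun i => if unlift ord0 i is Some j then xs j else x); split.
  by move=> i; case: unlift.
by rewrite big_ord_recl unlift_none; congr (_ + _); apply: eq_bigr => i _; rewrite liftK.
Qed.

Lemma in_span_ind X S v : S 0 -> (forall c x w, X x -> S w -> S (c *: x + w)) ->
  in_span X v -> S v.
Proof.
move=> S0 Scons [n [cs [xs [Xxs ->]]]]; elim: n cs xs Xxs => [|n IH] cs xs Xxs.
  by rewrite big_ord0.
rewrite big_ord_recl; apply: Scons => //.
exact: (IH (fun i => cs (lift ord0 i)) (fun i => xs (lift ord0 i))).
Qed.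

Lemma in_span_subspace X S v : S 0 -> (forall u w, S u -> S w -> S (u + w)) ->
  (forall c w, S w -> S (c *: w)) -> (forall x, X x -> S x) -> in_span X v -> S v.
Proof. by move=> S0 SD SZ XS; apply: in_span_ind => // c x w /XS Sx Sw; apply/SD/Sw/SZ. Qed.

Lemma in_span_mem X x : X x -> in_span X x.
Proof. by move=> Xx; rewrite -[x]addr0 -[x]scale1r; apply/in_span_cons/in_span0. Qed.

Lemma in_spanD X u v : in_span X u -> in_span X v -> in_span X (u + v).
Proof.
move=> + Sv; apply: (in_span_ind (S := fun u => in_span X (u + v))); first by rewrite add0r.
by move=> c x w Xx Swv; rewrite -addrA; apply: in_span_cons.
Qed.

Lemma in_spanZ X c v : in_span X v -> in_span X (c *: v).
Proof.
move=> [n [cs [xs [Xxs ->]]]]; exists n, (fun i => c * cs i), xs; split => //.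
by rewrite scaler_sumr; apply: eq_bigr => i _; rewrite scalerA.
Qed.

Lemma in_span_mono X Y v : (forall x, X x -> Y x) -> in_span X v -> in_span Y v.
Proof. by move=> XY [n [cs [xs [Xxs ->]]]]; exists n, cs, xs; split => // i; apply: XY. Qed.

Lemma in_span_big (T : eqType) X (s : seq T) (c : T -> F) (h : T -> V) :
  (forall k, k \in s -> X (h k)) -> in_span X (\sum_(k <- s) c k *: h k).
Proof.
elim: s => [|a s IH] Xh; first by rewrite big_nil; apply: in_span0.
rewrite big_cons; apply: in_span_cons; first by apply: Xh; rewrite inE eqxx.
by apply: IH => k ks; apply: Xh; rewrite inE ks orbT.
Qed.

End Spans.

Lemma in_span_image (F : fieldType) (A : structure) (V W : lmodType F)
    (act : autom A -> V -> V) (U X : V -> Prop) (Y : W -> Prop) (phi : V -> W) v :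
  eq_subspace act U ->
  (forall u w, U u -> U w -> phi (u + w) = phi u + phi w) ->
  (forall c u, U u -> phi (c *: u) = c *: phi u) ->
  (forall x, X x -> U x /\ Y (phi x)) -> in_span X v -> in_span Y (phi v).
Proof.
move=> [U0 UD UZ _] phiD phiZ XY /(in_span_ind (S := fun v => U v /\ in_span Y (phi v))).
case=> // [|c x w /XY[Ux Yx] [Uw Yw]].
  by have := phiZ 0 0 U0; rewrite !scale0r => ->; split; last exact: in_span0.
split; first by apply/UD/Uw/UZ.
by rewrite phiD ?phiZ //; [apply: in_span_cons | apply: UZ].
Qed.

Section InvariantSpans.
Variables (F : fieldType) (A : structure) (V : lmodType F) (act : autom A -> V -> V).
Hypothesis act_lin : lin_action act.

Lemma in_span_act X (pi : autom A) v :
  Defs.invariant act X -> in_span X v -> in_span X (act pi v).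
Proof.
move=> Xinv; apply: (in_span_ind (S := fun v => in_span X (act pi v))) => [|c x w Xx Sw].
  by rewrite act0 //; apply: in_span0.
by rewrite actD // actZ //; apply: in_span_cons => //; apply: Xinv.
Qed.

Lemma eq_subspace_span X : Defs.invariant act X -> eq_subspace act (in_span X).
Proof.
move=> Xinv; split; [exact: in_span0 | exact: in_spanD | exact: in_spanZ |].
by move=> pi v; apply: in_span_act.
Qed.

End InvariantSpans.

Section FreeSpace.
Variables (F : fieldType) (A : structure) (d : nat).
Local Notation L := (Lin F A d).
Implicit Types (g : L) (k : d.-tuple A).

Definition lin_ext (V : lmodType F) (h : d.-tuple A -> V) g : V :=
  \sum_(k <- msupp g) g@_k *: h k.

Section LinearExtension.
Variables (V : lmodType F) (h : d.-tuple A -> V).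

Lemma lin_extEw g D : (msupp g `<=` D)%fset -> lin_ext h g = \sum_(k <- D) g@_k *: h k.
Proof.
move=> le; rewrite /lin_ext [LHS](big_fset_incl _ le) => //= k _ /mcoeff_outdom ->.
by rewrite scale0r.
Qed.

Lemma lin_extD g1 g2 : lin_ext h (g1 + g2) = lin_ext h g1 + lin_ext h g2.
Proof.
set D := (msupp g1 `|` msupp g2)%fset.
rewrite (@lin_extEw _ D) ?msuppD_le // (@lin_extEw g1 D) ?fsubsetUl //.
rewrite (@lin_extEw g2 D) ?fsubsetUr // -big_split /=.
by apply: eq_bigr => k _; rewrite mcoeffD scalerDl.
Qed.

Lemma lin_extZ c g : lin_ext h (c *: g) = c *: lin_ext h g.
Proof.
rewrite (@lin_extEw _ (msupp g)) ?msuppZ_le // /lin_ext scaler_sumr.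
by apply: eq_bigr => k _; rewrite mcoeffZ scalerA.
Qed.

Lemma lin_ext0 : lin_ext h 0 = 0.
Proof. by rewrite /lin_ext msupp0 big_seq_fset0. Qed.

Lemma lin_extU c k : lin_ext h << c *g k >> = c *: h k.
Proof. by rewrite (@lin_extEw _ _ msuppU_le) big_seq_fset1 mcoeffUU. Qed.

Lemma lin_ext_morph (W : lmodType F) (phi : V -> W) g :
  (forall u v, phi (u + v) = phi u + phi v) -> (forall c v, phi (c *: v) = c *: phi v) ->
  phi (lin_ext h g) = lin_ext (phi \o h) g.
Proof.
move=> phiD phiZ; have phi0 : phi 0 = 0 by have := phiZ 0 0; rewrite !scale0r.
by rewrite /lin_ext (big_morph phi phiD phi0); apply: eq_bigr => k _; apply: phiZ.
Qed.

End LinearExtension.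

Lemma malgU_scale c k : << c *g k >> = c *: (<< k >> : L).
Proof. by apply/malgP => k'; rewrite mcoeffZ !mcoeffU mulr_natr. Qed.

Lemma lin_ext_unit g : lin_ext (fun k => (<< k >> : L)) g = g.
Proof. by rewrite [RHS]monalgE /lin_ext; apply: eq_bigr => k _; rewrite [RHS]malgU_scale. Qed.

Lemma lin_actE pi g : lin_act pi g = lin_ext (fun k => (<< tact pi k >> : L)) g.
Proof. by apply: eq_bigr => k _; rewrite malgU_scale. Qed.

Lemma lin_actU pi k : lin_act pi (<< k >> : L) = << tact pi k >>.
Proof. by rewrite lin_actE lin_extU scale1r. Qed.

Lemma lin_act_action : lin_action (@lin_act F A d).
Proof.
have lin_actD pi (u v : L) : lin_act pi (u + v) = lin_act pi u + lin_act pi v.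
  by rewrite !lin_actE lin_extD.
have lin_actZ pi c (v : L) : lin_act pi (c *: v) = c *: lin_act pi v.
  by rewrite !lin_actE lin_extZ.
split=> [//|//| rho v rho_id | pi sigma rho v rhoE].
  rewrite lin_actE -[RHS]lin_ext_unit; apply: eq_bigr => k _.
  by rewrite /tact eq_map_tuple_id.
rewrite [in RHS](lin_actE sigma) lin_ext_morph // lin_actE.
apply: eq_bigr => k _ /=; rewrite lin_actU /tact map_tuple_comp.
by congr (_ *: << _ >>); apply/val_inj/eq_map => a; rewrite rhoE.
Qed.

Lemma lin_supported g :
  supported_by (@lin_act F A d) (flatten [seq val k | k <- msupp g]) g.
Proof.
move=> pi pi_id; rewrite [RHS]monalgE; apply: eq_big_seq => k kg.
congr << _ *g _ >>; apply: val_inj; rewrite /= -[RHS]map_id; apply/eq_in_map => a ak.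
by apply: pi_id; apply/flattenP; exists (val k); first exact: map_f.
Qed.

Lemma lin_fin_supp : fin_supp (@lin_act F A d).
Proof. by move=> g; eexists; apply: lin_supported. Qed.

Lemma malgU1_inj : injective (fun k => (<< k >> : L)).
Proof.
move=> t u /(congr1 (mcoeff t)); rewrite !mcoeffU eqxx.
by case: eqP => // _ /eqP; rewrite oner_eq0.
Qed.

Lemma lin_ofs : ofs_space (@lin_act F A d).
Proof.
split; [exact: lin_act_action | exact: lin_fin_supp |].
exists (fun v => exists k, v = << k >>); split => //.
- by move=> pi v [k ->]; exists (tact pi k); rewrite lin_actU.
- exists d, (fun _ => True), eq, (fun k => << k >>); split => //.
  + by split=> //; split=> [t u _ _ ->|t u w _ _ _ -> ->].
  + by move=> pi t u _ _ ->.
  + split; first by move=> t _; exists t.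
    split; first by move=> x [k ->]; exists k.
    by move=> t u _ _; split=> [/malgU1_inj|->].
  + by move=> pi t _; rewrite lin_actU.
- move=> w _; rewrite -[w]lin_ext_unit; apply: in_span_big => k _.
  by exists k.
Qed.

End FreeSpace.

Section Orbits.
Variables (F : fieldType) (A : structure) (V : lmodType F) (act : autom A -> V -> V).
Hypothesis act_lin : lin_action act.

Definition orbits (ws : seq V) (v : V) : Prop :=
  exists i (pi : autom A), (i < size ws)%N /\ v = act pi (nth 0 ws i).

Lemma orbits_invariant ws : Defs.invariant act (orbits ws).
Proof.
move=> pi v [i [sigma [ilt ->]]]; exists i, (autom_comp pi sigma).
by rewrite act_comp.
Qed.

Lemma orbits_cons w ws v : orbits ws v -> orbits (w :: ws) v.
Proof. by move=> [i [pi [ilt ->]]]; exists i.+1, pi. Qed.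

Lemma orbits_head w ws : orbits (w :: ws) w.
Proof. by exists 0%N, (autom_id A); rewrite act_id. Qed.

Section Coding.
Variables (ws : seq V) (D : nat) (code : nat -> seq A).
Hypothesis size_code_eq : forall i, (i < size ws)%N -> size (code i) = D.
Hypothesis code_faithful : forall (pi sigma : autom A) i j,
  (i < size ws)%N -> (j < size ws)%N -> map pi (code i) = map sigma (code j) ->
  i = j /\ act pi (nth 0 ws i) = act sigma (nth 0 ws i).

Let coded (t : D.-tuple A) (ip : nat * autom A) :=
  (ip.1 < size ws)%N /\ val t = map ip.2 (code ip.1).

Let index_autom : inhabited (nat * autom A) := inhabits (0%N, autom_id A).

Let decode (t : D.-tuple A) : V :=
  let ip := epsilon index_autom (coded t) in act ip.2 (nth 0 ws ip.1).

Let decodeE t i pi : coded t (i, pi) -> decode t = act pi (nth 0 ws i).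
Proof.
move=> cod; rewrite /decode /=.
have [jlt tE] := epsilon_spec index_autom (coded t) (ex_intro _ _ cod).
by have [<- ->] := code_faithful cod.1 jlt (etrans (esym cod.2) tE).
Qed.

Let coded_tact t ip pi : coded t ip -> coded (tact pi t) (ip.1, autom_comp pi ip.2).
Proof. by case=> ilt tE; split=> //=; rewrite tE -map_comp. Qed.

Lemma orbits_orbit_finite_coded : orbit_finite_subset act (orbits ws).
Proof.
pose P t := exists ip, coded t ip.
have decode_equiv pi t : P t -> decode (tact pi t) = act pi (decode t).
  move=> [[i sigma] cod]; rewrite (decodeE cod) (decodeE (coded_tact pi cod)).
  exact: act_comp.
exists D, P, (fun t u => decode t = decode u), decode; split => //.
- by move=> pi t [ip cod]; exists (ip.1, autom_comp pi ip.2); apply: coded_tact.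
- by split=> //; split=> [t u _ _ -> | t u w _ _ _ -> ->].
- by move=> pi t u Pt Pu /= tu; rewrite !decode_equiv // tu.
split; first by move=> t [[i pi] cod]; exists i, pi; split; [exact: cod.1 | exact: decodeE].
split=> // x [i [pi [ilt ->]]].
have size_t : size (map pi (code i)) == D by rewrite size_map size_code_eq.
by exists (Tuple size_t); [exists (i, pi) | apply: decodeE].
Qed.

End Coding.
End Orbits.

Section Codes.
Variables (A : structure) (b c : A) (n L : nat) (S : nat -> seq A).
Hypothesis neq_bc : b != c.

(* The first entry of a prefix is always b, so the image of b can be read off
   map pi (code_prefix i), and i is the number of further entries equal to it. *)
Definition code_prefix i := b :: nseq i b ++ nseq (n - i) c.

Lemma size_code_prefix i : (i <= n)%N -> size (code_prefix i) = n.+1.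
Proof. by move=> le_in; rewrite /= size_cat !size_nseq subnKC. Qed.

Lemma count_code_prefix (pi : autom A) i :
  count (pred1 (pi b)) (map pi (code_prefix i)) = i.+1.
Proof.
rewrite count_map (eq_count (a2 := pred1 b)) => [|x /=]; last first.
  by rewrite inj_eq //; apply: autom_inj.
by rewrite /= eqxx count_cat !count_nseq /= eqxx eq_sym (negbTE neq_bc) mul0n mul1n addn0.
Qed.

Definition code i := code_prefix i ++ (S i ++ nseq (L - size (S i)) b).

Lemma size_code i : (i <= n)%N -> (size (S i) <= L)%N -> size (code i) = (n.+1 + L)%N.
Proof.
by move=> le_in le_SL; rewrite size_cat size_code_prefix // size_cat size_nseq subnKC.
Qed.

Lemma code_inj (pi sigma : autom A) i j : (i <= n)%N -> (j <= n)%N ->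
  map pi (code i) = map sigma (code j) -> i = j /\ {in S i, pi =1 sigma}.
Proof.
move=> le_in le_jn /eqP; rewrite !map_cat eqseq_cat ?size_map ?size_code_prefix //.
case/andP => /eqP eq_prefix eq_suffix.
have eq_b : pi b = sigma b by case: eq_prefix.
have eq_ij : i = j.
  have := congr1 (count (pred1 (pi b))) eq_prefix.
  by rewrite count_code_prefix eq_b count_code_prefix => -[].
split=> //; subst j; apply/eq_in_map.
by move: eq_suffix; rewrite eqseq_cat ?size_map // => /andP[/eqP].
Qed.

End Codes.

Lemma orbits_orbit_finite (F : fieldType) (A : structure) (V : lmodType F)
    (act : autom A -> V -> V) (b c : A) (ws : seq V) :
  lin_action act -> fin_supp act -> b != c -> orbit_finite_subset act (orbits act ws).
Proof.
move=> act_lin act_fs neq_bc.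
pose supp w := epsilon (inhabits [::]) (fun S => supported_by act S w).
have suppP w : supported_by act (supp w) w by apply: epsilon_spec (act_fs w).
pose S i := supp (nth 0 ws i); pose L := \max_(w <- ws) size (supp w).
have le_SL i : (i < size ws)%N -> (size (S i) <= L)%N.
  move=> ilt; apply: (@leq_bigmax_seq _ ws xpredT (fun w => size (supp w))) => //.
  exact: mem_nth.
apply: (@orbits_orbit_finite_coded _ _ _ _ act_lin ws ((size ws).+1 + L)
          (code b c (size ws) L S)).
  by move=> i ilt; apply: size_code; [apply: ltnW | apply: le_SL].
move=> pi sigma i j ilt jlt /(code_inj neq_bc (ltnW ilt) (ltnW jlt)) [<- agree].
by split=> //; apply: act_supported (suppP _) agree.
Qed.

Section Covers.
Variables (F : fieldType) (A : structure) (V : lmodType F) (act : autom A -> V -> V).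
Hypothesis act_lin : lin_action act.

Definition equivariant_cover d (Phi : Lin F A d -> V) : Prop :=
  [/\ {morph Phi : u v / u + v}, forall c, {morph Phi : u / c *: u},
      forall pi, {morph Phi : u / lin_act pi u >-> act pi u} &
      forall v, exists u, Phi u = v].

Lemma lin_ext_equivariant d (h : d.-tuple A -> V) pi u :
  (forall k, h (tact pi k) = act pi (h k)) ->
  lin_ext h (lin_act pi u) = act pi (lin_ext h u).
Proof.
move=> h_equiv; rewrite lin_actE lin_ext_morph; last 2 first.
- exact: lin_extD.
- exact: lin_extZ.
rewrite [RHS]lin_ext_morph; [|exact: actD|exact: actZ].
by apply: eq_bigr => k _ /=; rewrite lin_extU scale1r h_equiv.
Qed.

Lemma eq_subspace0 : eq_subspace act (eq^~ 0).
Proof.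
split=> [//|u v -> ->|c v ->|pi v ->]; by rewrite ?addr0 ?scaler0 ?act0.
Qed.

Lemma eq_subspace_preimage d (Phi : Lin F A d -> V) (P : V -> Prop) :
  equivariant_cover Phi -> eq_subspace act P -> eq_subspace (@lin_act F A d) (P \o Phi).
Proof.
move=> [PhiD PhiZ Phi_equiv _] [P0 PD PZ Pinv].
split=> [|u v Pu Pv|c u Pu|pi u Pu] /=.
- by have := PhiZ 0 0; rewrite !scale0r => ->.
- by rewrite PhiD; apply: PD.
- by rewrite PhiZ; apply: PZ.
- by rewrite Phi_equiv; apply: Pinv.
Qed.

Lemma ofs_cover (a0 : A) : of_spanned_on act (fun _ => True) ->
  exists d (Phi : Lin F A d.+1 -> V), equivariant_cover Phi.
Proof.
move=> [X [_ _ [d [P [_ [f [Pinv _ _ [fX [fsurj _]] f_equiv]]]]] Xspan]].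
(* A dummy first coordinate keeps the dimension positive when d = 0. *)
pose h (t : d.+1.-tuple A) :=
  if excluded_middle_informative (P (behead_tuple t)) then f (behead_tuple t) else 0.
have behead_tact pi (t : d.+1.-tuple A) :
    behead_tuple (tact pi t) = tact pi (behead_tuple t).
  by apply: val_inj; rewrite /= behead_map.
have h_equiv pi t : h (tact pi t) = act pi (h t).
  rewrite /h behead_tact.
  case: (excluded_middle_informative (P (behead_tuple t))) => [Pt|nPt].
    by case: excluded_middle_informative => [Ppt|[]]; [apply: f_equiv | apply: Pinv].
  case: excluded_middle_informative => [Ppt|nPpt]; last by rewrite act0.
  by case: nPt; rewrite -(tactK pi (behead_tuple t)); apply: Pinv.
exists d, (lin_ext h); split=> [u v | c u | pi u | v].
- exact: lin_extD.
- exact: lin_extZ.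
- exact: lin_ext_equivariant.
apply: (in_span_ind (S := fun v => exists u, lin_ext h u = v) _ _ (Xspan v I)).
  by exists 0; rewrite lin_ext0.
move=> c x _ /fsurj [t Pt <-] [u <-].
exists (c *: << [tuple of a0 :: t] >> + u); rewrite lin_extD lin_extZ lin_extU scale1r /h.
have -> : behead_tuple [tuple of a0 :: t] = t by apply: val_inj.
by case: excluded_middle_informative.
Qed.

End Covers.

Section Chains.
Variables (F : fieldType) (A : structure) (V : lmodType F) (act : autom A -> V -> V).
Variable C : nat -> V -> Prop.
Hypothesis C_chain : strict_chain act C.

Lemma strict_chain_mono m n v : (m <= n)%N -> C m v -> C n v.
Proof.
elim: n => [|n IH]; first by rewrite leqn0 => /eqP ->.
rewrite leq_eqVlt => /orP [/eqP -> //|]; rewrite ltnS => le_mn Cm.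
by case: (C_chain n) => _ Cn_sub _; apply/Cn_sub/IH.
Qed.

Lemma eq_subspace_chain_union : eq_subspace act (fun v => exists n, C n v).
Proof.
split=> [|u v [m Cu] [n Cv]|c v [n Cv]|pi v [n Cv]].
- by exists 0%N; case: (C_chain 0%N) => -[].
- exists (maxn m n); case: (C_chain (maxn m n)) => -[_ CD _ _] _ _.
  by apply: CD; [apply: strict_chain_mono (leq_maxl m n) Cu |
                 apply: strict_chain_mono (leq_maxr m n) Cv].
- by exists n; case: (C_chain n) => -[_ _ CZ _] _ _; apply: CZ.
- by exists n; case: (C_chain n) => -[_ _ _ Cinv] _ _; apply: Cinv.
Qed.

Lemma orbit_finite_chain_bounded X : oligomorphic A -> orbit_finite_subset act X ->
  (forall x, X x -> exists n, C n x) -> exists N, forall x, X x -> C N x.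
Proof.
move=> olig [d [P [_ [f [Pinv _ _ [fX [fsurj _]] f_equiv]]]]] XC.
have [reps reps_orbits] := oligomorphic_orbits d olig.
have [N CN] : exists N, forall r, r \in reps -> P r -> C N (f r).
  elim: reps {reps_orbits} => [|r reps [N CN]]; first by exists 0%N.
  have [Pr|nPr] := classic (P r); last first.
    by exists N => r'; rewrite inE => /orP [/eqP -> //|]; apply: CN.
  have [M CM] := XC _ (fX _ Pr); exists (maxn N M) => r'.
  rewrite inE => /orP [/eqP -> _|r'_reps Pr'].
    exact: strict_chain_mono (leq_maxr _ _) CM.
  exact: strict_chain_mono (leq_maxl _ _) (CN _ r'_reps Pr').
exists N => x /fsurj [t Pt <-]; have [r r_reps [pi rt]] := reps_orbits t; subst t.
have := Pinv (autom_inv pi) _ Pt; rewrite tactK => Pr.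
by rewrite f_equiv //; case: (C_chain N) => -[_ _ _ Cinv] _ _; apply/Cinv/CN.
Qed.

Lemma strict_chain_preimage d (Phi : Lin F A d -> V) :
  equivariant_cover act Phi -> strict_chain (@lin_act F A d) (fun n => C n \o Phi).
Proof.
move=> Phi_cover n; have [Cn_sub Cn_mono [v [Cv nCv]]] := C_chain n.
split; first exact: eq_subspace_preimage Phi_cover Cn_sub.
  by move=> u; apply: Cn_mono.
by case: Phi_cover => _ _ _ /(_ v) [u uv]; exists u; rewrite /= uv.
Qed.

End Chains.

Section Conditions.
Variables (F : fieldType) (A : structure).

Lemma no_strict_chain_of_closed (V : lmodType F) (act : autom A -> V -> V) :
  oligomorphic A -> (forall W, eq_subspace act W -> of_spanned_on act W) ->
  ~ exists C, strict_chain act C.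
Proof.
move=> olig closed [C C_chain].
have [X [X_sub _ X_of X_span]] := closed _ (eq_subspace_chain_union C_chain).
have [N CN] := orbit_finite_chain_bounded C_chain olig X_of X_sub.
have [[CN0 CND CNZ _] _ [v [Cv nCv]]] := C_chain N.
by apply/nCv/(in_span_subspace CN0 CND CNZ CN)/X_span; exists N.+1.
Qed.

Lemma closed_of_no_strict_chain (V : lmodType F) (act : autom A -> V -> V) (b c : A) :
  lin_action act -> fin_supp act -> b != c -> (~ exists C, strict_chain act C) ->
  forall W, eq_subspace act W -> of_spanned_on act W.
Proof.
move=> act_lin act_fs neq_bc no_chain W [W0 WD WZ Winv].
apply: NNPP => not_spanned.
have grow ws : (forall w, w \in ws -> W w) ->
    exists v, W v /\ ~ in_span (orbits act ws) v.
  move=> ws_W; apply: NNPP => all_spanned; apply: not_spanned.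
  exists (orbits act ws); split.
  - by move=> x [i [pi [ilt ->]]]; apply/Winv/ws_W/mem_nth.
  - exact: orbits_invariant.
  - exact: orbits_orbit_finite act_lin act_fs neq_bc.
  - by move=> w Ww; apply: NNPP => nw; apply: all_spanned; exists w.
pose next ws := epsilon (inhabits 0) (fun v => W v /\ ~ in_span (orbits act ws) v).
pose ws n := iter n (fun s => next s :: s) [::].
have ws_W n w : w \in ws n -> W w.
  elim: n w => [//|n IH] w; rewrite inE => /orP [/eqP ->|]; last exact: IH.
  exact: (epsilon_spec _ _ (grow _ (IH))).1.
apply: no_chain; exists (fun n => in_span (orbits act (ws n))) => n; split.
- exact/eq_subspace_span/orbits_invariant.
- by move=> v; apply: in_span_mono => x; apply: orbits_cons.
- exists (next (ws n)); split; first exact/in_span_mem/orbits_head.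
  exact: (epsilon_spec _ _ (grow _ (ws_W n))).2.
Qed.

Lemma no_strict_chain_of_free (V : lmodType F) (act : autom A -> V -> V) (a0 : A) :
  ofs_space act ->
  (forall d, (1 <= d)%N -> ~ exists C, strict_chain (@lin_act F A d) C) ->
  ~ exists C, strict_chain act C.
Proof.
move=> [act_lin _ spanned] no_chain [C C_chain].
have [d [Phi Phi_cover]] := ofs_cover act_lin a0 spanned.
by apply: (no_chain d.+1 erefl); exists (fun n => C n \o Phi); apply: strict_chain_preimage.
Qed.

Definition free_quotient (V : lmodType F) (act : autom A -> V -> V) : Prop :=
  exists d : nat, (1 <= d)%N /\
    exists (U W : Lin F A d -> Prop) (phi : Lin F A d -> V),
      [/\ eq_subspace (@lin_act F A d) U, eq_subspace (@lin_act F A d) W,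
          (forall w, W w -> U w) & quotient_presentation act U W phi].

Lemma free_quotient_of_ofs (V : lmodType F) (act : autom A -> V -> V) (a0 : A) :
  ofs_space act -> free_quotient act.
Proof.
move=> [act_lin _ spanned]; have [d [Phi Phi_cover]] := ofs_cover act_lin a0 spanned.
have [PhiD PhiZ Phi_equiv Phi_onto] := Phi_cover.
exists d.+1; split=> //; exists (fun _ => True), (fun u => Phi u = 0), Phi; split=> //.
- exact: eq_subspace_preimage Phi_cover (eq_subspace0 act_lin).
split=> [u v _ _|c u _|pi u _|v|//]; [exact: PhiD | exact: PhiZ | exact: Phi_equiv |].
by have [u <-] := Phi_onto v; exists u.
Qed.

Lemma ofs_of_free_quotient (V : lmodType F) (act : autom A -> V -> V) :
  (forall d (U : Lin F A d -> Prop), eq_subspace (@lin_act F A d) U ->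
     of_spanned_on (@lin_act F A d) U) ->
  lin_action act -> free_quotient act -> ofs_space act.
Proof.
move=> closed act_lin [d [_ [U [_ [phi [U_sub _ _ [phiD phiZ phi_equiv phi_onto _]]]]]]].
split=> // [v|].
  have [u Uu <-] := phi_onto v; have [S u_supp] := lin_fin_supp u.
  by exists S => pi pi_S; rewrite -phi_equiv // u_supp.
have [X [X_U X_inv X_of X_span]] := closed _ _ U_sub.
exists (fun v => exists2 u, X u & v = phi u); split=> //.
- move=> pi v [u Xu ->]; exists (lin_act pi u); first exact: X_inv.
  by rewrite phi_equiv //; apply: X_U.
- by apply: orbit_finite_image X_of => pi u Xu; rewrite phi_equiv //; apply: X_U.
- move=> v _; have [u Uu <-] := phi_onto v.
  apply: (in_span_image U_sub phiD phiZ _ (X_span u Uu)).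
  by move=> x Xx; split; [apply: X_U | exists x].
Qed.

End Conditions.

Theorem mainTheorem1 (F : fieldType) (A : structure) :
  countably_infinite A -> oligomorphic A ->
  let cond_a := forall (V : lmodType F) (act : autom A -> V -> V),
      ofs_space act -> forall W : V -> Prop, eq_subspace act W ->
      of_spanned_on act W in
  let cond_b := forall (V : lmodType F) (act : autom A -> V -> V),
      ofs_space act -> ~ exists C : nat -> V -> Prop, strict_chain act C in
  let cond_c := forall d : nat, (1 <= d)%N ->
      ~ exists C : nat -> Lin F A d -> Prop, strict_chain (@lin_act F A d) C in
  [/\ (cond_a <-> cond_b), (cond_b <-> cond_c) &
      (cond_a ->
       forall (V : lmodType F) (act : autom A -> V -> V),
         lin_action act ->
         (ofs_space act <->
          exists d : nat, (1 <= d)%N /\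
          exists (U W : Lin F A d -> Prop) (phi : Lin F A d -> V),
            [/\ eq_subspace (@lin_act F A d) U, eq_subspace (@lin_act F A d) W,
                (forall w, W w -> U w) &
                quotient_presentation act U W phi]))].
Proof.
move=> [e e_inj] olig /=; have neq_e01 : e 0%N != e 1%N by apply/eqP => /e_inj.
split; first split.
- by move=> closed V act ofs; apply: no_strict_chain_of_closed olig (closed V act ofs).
- move=> no_chain V act ofs; have [act_lin act_fs _] := ofs.
  exact: closed_of_no_strict_chain act_lin act_fs neq_e01 (no_chain V act ofs).
- split=> [no_chain d _ | no_chain_free V act ofs]; first exact: no_chain (lin_ofs F A d).
  exact: no_strict_chain_of_free (e 0%N) ofs no_chain_free.
- move=> closed V act act_lin; split; first exact: free_quotient_of_ofs (e 0%N).
  by apply: ofs_of_free_quotient act_lin => d; apply: closed (lin_ofs F A d).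
Qed.
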